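(* For every positive integer $n$: (a) $\displaystyle cl_b(n)=\sum_{k=0}^{n-1}cl_b(k)\big(1-\vartheta_2(n-k)\big)$; (b) $\displaystyle\sum_{k=0}^{n}cl_b(k)\big(1-h(n-k)\big)=1$, with $h(0)=0$.
   Context: A Carlitz-binary composition of $m$ is an ordered sequence of powers of $2$ (including $1$) summing to $m$ in which each part differs from its adjacent parts. $cl_b(m)$ is the number of Carlitz-binary compositions of $m$, with $cl_b(0)=1$. $\vartheta_2$ is the $2$-adic valuation and $h(m)$ is the number of ones in the binary representation of $m$. *)

From mathcomp Require Import all_boot all_order all_algebra.
Set Implicit Arguments. Unset Strict Implicit. Unset Printing Implicit Defensive.

(* All compositions (ordered sequences of positive integers) of m,
   enumerated recursively by the first part; fuel >= m suffices. *)
Fixpoint comps_aux (fuel m : nat) : seq (seq nat) :=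
  if m is 0 then [:: [::]] else
  if fuel is f.+1 then
    flatten [seq [seq i :: s | s <- comps_aux f (m - i)] | i <- iota 1 m]
  else [::].

Definition compositions (m : nat) : seq (seq nat) := comps_aux m m.

Definition is_pow2 (x : nat) : bool := [exists k : 'I_x.+1, x == 2 ^ k].

(* Carlitz-binary composition of m: parts are powers of 2, sum to m,
   and adjacent parts are distinct. *)
Definition carlitz_binary (m : nat) (s : seq nat) : bool :=
  [&& all (fun x => 0 < x) s, all is_pow2 s, sumn s == m &
      sorted (fun a b => a != b) s].

(* number of Carlitz-binary compositions of m (cl_b 0 = 1: the empty one) *)
Definition cl_b (m : nat) : nat :=
  count (carlitz_binary m) (undup (compositions m)).

Definition v2 (m : nat) : nat := logn 2 m.

(* number of ones in the binary representation of m (h 0 = 0) *)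
Definition h (m : nat) : nat := \sum_(i < m.+1) odd (m %/ 2 ^ i).

(* Let f_j(n) count the Carlitz-binary compositions of n with first part 2^j.
   Removing that part, and discarding the compositions of n - 2^j that start
   with 2^j again, gives f_j(n) = cl_b(n - 2^j) - f_j(n - 2^j), which unrolls
   to f_j(n) = sum_(q >= 1) (-1)^(q-1) cl_b(n - q 2^j).  Summing over j, the
   coefficient of cl_b(k) in cl_b(n) is the sum of (-1)^(N/2^j - 1) over the
   2^j dividing N = n - k; the quotient is even for j < v2(N) and odd for
   j = v2(N), whence 1 - v2(N).  Identity (b) follows from (a) by induction on
   n, since h(m + 1) = h(m) + 1 - v2(m + 1). *)

From mathcomp Require Import all_boot all_order all_algebra zify.
Import GRing.Theory.

Lemma is_pow2P x : reflect (exists j, x = 2 ^ j) (is_pow2 x).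
Proof.
apply: (iffP existsP) => [[k /eqP ->]|[j ->]]; first by exists k.
by exists (Ordinal (ltnW (ltn_expl j (isT : 1 < 2)) : j < (2 ^ j).+1)).
Qed.

Lemma comps_auxS f m : comps_aux f.+1 m.+1 =
  flatten [seq [seq i :: s | s <- comps_aux f (m.+1 - i)] | i <- iota 1 m.+1].
Proof. by []. Qed.

Lemma mem_comps_aux fuel m s : m <= fuel -> all (fun x => 0 < x) s ->
  sumn s = m -> s \in comps_aux fuel m.
Proof.
elim: fuel m s => [|f IH] m s.
  by rewrite leqn0 => /eqP ->; case: s => [|x s] //= /andP[x_gt0 _]; lia.
case: m => [|m] le_m_f; first by case: s => [|x s] //= /andP[x_gt0 _]; lia.
case: s => [|x s] // /andP[x_gt0 s_gt0] sum_xs.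
rewrite /= in sum_xs; rewrite comps_auxS.
apply/flatten_mapP; exists x; first by rewrite mem_iota; lia.
by apply: map_f; apply: IH => //; lia.
Qed.

Definition head_neq (t : nat) (s : seq nat) : bool :=
  if s is x :: _ then x != t else true.

Lemma carlitz_binary_cons n x s : carlitz_binary n (x :: s) =
  [&& is_pow2 x, x <= n, carlitz_binary (n - x) s & head_neq x s].
Proof.
have path_neq : path (fun a b => a != b) x s =
    head_neq x s && sorted (fun a b => a != b) s.
  by case: s => //= y s; rewrite eq_sym.
rewrite /carlitz_binary /= path_neq.
have [/is_pow2P[j ->]|_] := boolP (is_pow2 x); last by rewrite !andbF.
rewrite expn_gt0 /=; have [le_xn|lt_nx] := leqP (2 ^ j) n.
  rewrite -[sumn s == _](eqn_add2l (2 ^ j)) subnKC //=.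
  by case: (head_neq _ s); rewrite /= ?andbT ?andbF.
by rewrite gtn_eqF ?andbF // ltn_addr.
Qed.

Lemma carlitz_binary0 s : carlitz_binary 0 s = (s == [::]).
Proof.
case: s => [|x s] //; rewrite carlitz_binary_cons leqn0.
by have [/is_pow2P[j ->]|] := boolP (is_pow2 x); rewrite ?expn_eq0.
Qed.

Fixpoint carlitz_comps (fuel n t : nat) : seq (seq nat) :=
  if n is 0 then [:: [::]] else
  if fuel is f.+1 then
    [seq 2 ^ j :: s | j <- [seq j <- iota 0 n | (2 ^ j <= n) && (2 ^ j != t)],
                      s <- carlitz_comps f (n - 2 ^ j) (2 ^ j)]
  else [::].

Lemma carlitz_compsS f n t : carlitz_comps f.+1 n.+1 t =
  flatten [seq [seq 2 ^ j :: s | s <- carlitz_comps f (n.+1 - 2 ^ j) (2 ^ j)]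
          | j <- [seq j <- iota 0 n.+1 | (2 ^ j <= n.+1) && (2 ^ j != t)]].
Proof. by []. Qed.

Lemma mem_carlitz_comps fuel n t s : n <= fuel ->
  (s \in carlitz_comps fuel n t) = carlitz_binary n s && head_neq t s.
Proof.
elim: fuel n t s => [|f IH] n t s.
  by rewrite leqn0 => /eqP ->; rewrite inE carlitz_binary0; case: s.
case: n => [_|n le_n_f]; first by rewrite inE carlitz_binary0; case: s.
rewrite carlitz_compsS; apply/flatten_mapP/idP => [[j]|].
  rewrite mem_filter => /andP[/andP[le_jn neq_jt] _] /mapP[s' s'_in ->].
  have pow_gt0 : 0 < 2 ^ j by rewrite expn_gt0.
  rewrite IH in s'_in; last by lia.
  rewrite carlitz_binary_cons /= s'_in le_jn neq_jt !andbT.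
  by apply/is_pow2P; exists j.
case: s => [|x s]; first by case/andP=> /and4P[_ _ /eqP].
rewrite carlitz_binary_cons.
move=> /andP[/and4P[/is_pow2P[j ->] le_jn cb_s neq_s] neq_jt].
have pow_gt0 : 0 < 2 ^ j by rewrite expn_gt0.
have lt_j_pow := ltn_expl j (isT : 1 < 2).
exists j; first by rewrite mem_filter le_jn (neq_jt : 2 ^ j != t) mem_iota; lia.
by apply: map_f; rewrite IH ?cb_s ?neq_s //; lia.
Qed.

Lemma carlitz_comps_uniq fuel n t : uniq (carlitz_comps fuel n t).
Proof.
elim: fuel n t => [|f IH] [|n] t //; rewrite carlitz_compsS.
apply: allpairs_uniq_dep => [||[a u] [b v] _ _ /= [/eqP]].
- exact/filter_uniq/iota_uniq.
- by move=> j _; apply: IH.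
by rewrite eqn_exp2l // => /eqP <- ->.
Qed.

Definition cl_b_avoid (n t : nat) : nat := size (carlitz_comps n n t).

Definition cl_b_first (j n : nat) : nat :=
  if 2 ^ j <= n then cl_b_avoid (n - 2 ^ j) (2 ^ j) else 0.

Lemma size_carlitz_comps fuel n t :
  n <= fuel -> size (carlitz_comps fuel n t) = cl_b_avoid n t.
Proof.
move=> le_n_fuel; apply/perm_size/uniq_perm; rewrite ?carlitz_comps_uniq // => s.
by rewrite !mem_carlitz_comps.
Qed.

Lemma cl_bE n : cl_b n = cl_b_avoid n 0.
Proof.
rewrite /cl_b -size_filter; apply/perm_size/uniq_perm.
- exact/filter_uniq/undup_uniq.
- exact: carlitz_comps_uniq.
move=> s; rewrite mem_filter mem_undup mem_carlitz_comps //.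
have [cb_s|] //= := boolP (carlitz_binary n s).
have head_ne0 : head_neq 0 s.
  case: s cb_s => [|x s] //.
  by rewrite carlitz_binary_cons => /andP[/is_pow2P[j ->] _]; rewrite /= expn_eq0.
case/and4P: cb_s => pos_s _ /eqP sum_s _.
by rewrite head_ne0 mem_comps_aux.
Qed.

Lemma cl_b_avoidS n t :
  cl_b_avoid n.+1 t = \sum_(0 <= j < n.+1 | 2 ^ j != t) cl_b_first j n.+1.
Proof.
rewrite /cl_b_avoid carlitz_compsS size_flatten /shape -map_comp sumnE.
rewrite big_map big_filter.
rewrite big_mkcond [RHS]big_mkcond; apply: eq_bigr => j _ /=; rewrite /cl_b_first.
have pow_gt0 : 0 < 2 ^ j by rewrite expn_gt0.
have [le_jn|_] := leqP (2 ^ j) n.+1; last by case: ifP.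
by rewrite size_map size_carlitz_comps; [case: ifP | lia].
Qed.

Lemma cl_b_avoid_split j m :
  cl_b_avoid m 0 = cl_b_avoid m (2 ^ j) + cl_b_first j m.
Proof.
case: m => [|m]; first by rewrite /cl_b_first leqn0 expn_eq0.
rewrite !cl_b_avoidS (bigID (fun i => 2 ^ i != 2 ^ j)) /=; congr (_ + _).
  by apply: eq_bigl => i; rewrite expn_eq0.
have pow_eq i : (2 ^ i == 2 ^ j) = (i == j) by rewrite eqn_exp2l.
have [lt_jm|le_mj] := ltnP j m.+1.
  rewrite big_mkcond (bigD1_seq j) ?mem_index_iota ?iota_uniq //= expn_eq0 eqxx.
  by rewrite big1 ?addn0 // => i neq_ij; rewrite pow_eq neq_ij andbF.
have lt_m_pow : m.+1 < 2 ^ j by apply: leq_trans (ltn_expl j (isT : 1 < 2)).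
rewrite /cl_b_first leqNgt lt_m_pow big1_seq // => i /andP[/andP[_ /negPn]].
by rewrite pow_eq => /eqP ->; rewrite mem_index_iota ltnNge le_mj andbF.
Qed.

Lemma h0 : h 0 = 0.
Proof. by rewrite /h big_ord1. Qed.

Lemma sum_odd_div_pow2 B m : m <= B ->
  \sum_(i < B) odd (m %/ 2 ^ i) = \sum_(i < m) odd (m %/ 2 ^ i).
Proof.
move=> le_mB; rewrite -(subnKC le_mB) big_split_ord /=.
rewrite [X in _ + X = _]big1 ?addn0 // => i _.
rewrite divn_small //; apply: leq_trans (ltn_expl m (isT : 1 < 2)) _.
by rewrite leq_exp2l // leq_addr.
Qed.

Lemma h_digits B m : m <= B -> h m = \sum_(i < B) odd (m %/ 2 ^ i).
Proof. by move=> le_mB; rewrite /h !sum_odd_div_pow2. Qed.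

Lemma h_double a : h a.*2 = h a.
Proof.
have le_a_a2 : a <= a.*2 by rewrite -addnn leq_addr.
rewrite /h big_ord_recl expn0 divn1 odd_double add0n -/(h a).
rewrite (h_digits _ _ le_a_a2).
by apply: eq_bigr => i _; rewrite /bump /= expnS divnMA divn2 doubleK.
Qed.

Lemma h_double_add1 a : h a.*2.+1 = (h a).+1.
Proof.
have le_a_a21 : a <= a.*2.+1 by rewrite -addnn leqW // leq_addr.
rewrite /h big_ord_recl expn0 divn1 /= odd_double -/(h a).
rewrite (h_digits _ _ le_a_a21); congr _.+1.
by apply: eq_bigr => i _; rewrite /bump /= expnS divnMA divn2 /= uphalf_double.
Qed.

Lemma v2_double n : 0 < n -> v2 n.*2 = (v2 n).+1.
Proof. by move=> n_gt0; rewrite /v2 -mul2n lognM // logn_prime. Qed.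

Lemma v2_odd n : odd n -> v2 n = 0.
Proof. by move=> odd_n; rewrite /v2 logn_coprime // coprime2n odd_n. Qed.

Lemma h_succ m : h m.+1 + v2 m.+1 = (h m).+1.
Proof.
elim/ltn_ind: m => m IH; have m_eq := odd_double_half m.
set a := m./2 in m_eq; rewrite -{}m_eq in IH *.
case: (odd m) IH => IH /=; last first.
  by rewrite !add0n h_double_add1 h_double v2_odd ?addn0 //= odd_double.
rewrite add1n -doubleS h_double h_double_add1 v2_double // addnS IH //.
by rewrite -addnn addSn ltnS leq_addr.
Qed.

Local Open Scope ring_scope.

Section AlternatingInversion.
Variables (R : pzRingType) (i : nat) (c : nat -> R).
Hypothesis i_gt0 : (0 < i)%N.

Let alt_sum n := \sum_(0 <= k < n)
  (if (i %| n - k)%N then (-1) ^+ ((n - k) %/ i).-1 else 0) * c k.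

Let alt_sum_small n : (n < i)%N -> alt_sum n = 0.
Proof.
move=> lt_ni; rewrite /alt_sum big1_seq // => k /andP[_].
rewrite mem_index_iota => /andP[_ lt_kn].
by rewrite gtnNdvd ?mul0r ?subn_gt0 //; lia.
Qed.

Let alt_sum_rec n : (i <= n)%N -> alt_sum n = c (n - i)%N - alt_sum (n - i)%N.
Proof.
move=> le_in; rewrite /alt_sum (big_cat_nat (n := n - i)) ?leq_subr //=.
rewrite [\sum_(n - i <= k < n) _]big_ltn; last by lia.
rewrite subKn // dvdnn divnn i_gt0 mul1r.
rewrite [\sum_((n - i).+1 <= k < n) _]big1_seq ?addr0; last first.
  move=> k /andP[_]; rewrite mem_index_iota => /andP[lt_k lt_kn].
  by rewrite gtnNdvd ?mul0r //; lia.
rewrite addrC -sumrN; congr (_ + _); apply: eq_big_nat => k lt_k.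
have -> : (n - k = (n - i - k) + i)%N by lia.
rewrite dvdn_addl //; case: ifP => [dvd_i|_]; last by rewrite mul0r oppr0.
have q_gt0 : (0 < (n - i - k) %/ i)%N by rewrite divn_gt0 // dvdn_leq ?subn_gt0.
by rewrite divnDl // divnn i_gt0 addn1 -(prednK q_gt0) exprS mulN1r mulNr.
Qed.

Lemma alternating_inversion (a : nat -> R) :
    (forall n, (n < i)%N -> a n = 0) ->
    (forall n, (i <= n)%N -> a n = c (n - i)%N - a (n - i)%N) ->
  forall n, a n = \sum_(0 <= k < n)
    (if (i %| n - k)%N then (-1) ^+ ((n - k) %/ i).-1 else 0) * c k.
Proof.
move=> a_small a_rec; elim/ltn_ind => n IH; rewrite -/(alt_sum n).
have [lt_ni|le_in] := ltnP n i; first by rewrite a_small ?alt_sum_small.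
by rewrite a_rec // alt_sum_rec // IH // ltn_subrL i_gt0; lia.
Qed.

End AlternatingInversion.

Lemma signr_pred_odd (R : pzRingType) q :
  (0 < q)%N -> (-1) ^+ q.-1 = (if odd q then 1 else -1 : R).
Proof. by case: q => // q _; rewrite -signr_odd /=; case: (odd q). Qed.

Lemma odd_divn_pow2 j N :
  (2 ^ j %| N)%N -> odd (N %/ 2 ^ j) = ~~ (2 ^ j.+1 %| N)%N.
Proof.
move=> dvd_jN; rewrite -{2}(divnK dvd_jN) expnS.
by rewrite dvdn_pmul2r ?expn_gt0 // dvdn2 negbK.
Qed.

Lemma sum_sign_dvd_pow2 (R : pzRingType) N B : (0 < N)%N -> (N <= B)%N ->
  \sum_(0 <= j < B) (if (2 ^ j %| N)%N then (-1) ^+ (N %/ 2 ^ j).-1 else 0)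
    = 1 - (v2 N)%:R :> R.
Proof.
move=> N_gt0 le_NB; set v := v2 N.
have dvdE j : (2 ^ j %| N)%N = (j <= v)%N by rewrite pfactor_dvdn.
have quot_gt0 j : (j <= v)%N -> (0 < N %/ 2 ^ j)%N.
  by move=> le_jv; rewrite divn_gt0 ?expn_gt0 // dvdn_leq // dvdE.
have lt_vN : (v < N)%N.
  by apply: leq_trans (ltn_expl v (isT : (1 < 2)%N)) _; rewrite dvdn_leq ?dvdE.
clearbody v.
rewrite (big_cat_nat (n := v.+1)) //; last by lia.
rewrite [\sum_(v.+1 <= j < B) _]big1_seq ?addr0; last first.
  move=> j /andP[_]; rewrite mem_index_iota => /andP[lt_vj _].
  by rewrite dvdE leqNgt lt_vj.
rewrite big_nat_recr // dvdE leqnn signr_pred_odd ?quot_gt0 //.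
rewrite odd_divn_pow2 ?dvdE // ltnn (eq_big_nat _ _ (F2 := fun=> -1)).
  by rewrite /= addr0 sumr_const_nat subn0 mulNrn addrC.
move=> j /andP[_ lt_jv]; have le_jv := ltnW lt_jv.
by rewrite dvdE le_jv signr_pred_odd ?quot_gt0 // odd_divn_pow2 ?dvdE // lt_jv.
Qed.

Lemma cl_b_first_alternating j n : (cl_b_first j n)%:Z = \sum_(0 <= k < n)
  (if (2 ^ j %| n - k)%N then (-1) ^+ ((n - k) %/ 2 ^ j).-1 else 0) * (cl_b k)%:Z.
Proof.
have pow_gt0 : (0 < 2 ^ j)%N by rewrite expn_gt0.
move: n; apply: (alternating_inversion _ _ _ pow_gt0) => [m lt_m_pow|m le_pow_m].
  by rewrite /cl_b_first leqNgt lt_m_pow.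
by rewrite {1}/cl_b_first le_pow_m cl_bE (cl_b_avoid_split j) PoszD addrK.
Qed.

Lemma cl_b_rec n : (0 < n)%N ->
  (cl_b n)%:Z = \sum_(0 <= k < n) (cl_b k)%:Z * (1 - (v2 (n - k))%:Z).
Proof.
case: n => // n _; rewrite cl_bE cl_b_avoidS (big_morph Posz PoszD (erefl 0%:Z)).
rewrite (eq_bigl xpredT) => [|j]; last by rewrite expn_eq0.
under eq_bigr do rewrite cl_b_first_alternating.
rewrite exchange_big /=; apply: eq_big_nat => k lt_kn.
by rewrite -mulr_suml sum_sign_dvd_pow2 ?subn_gt0 ?leq_subr // natz mulrC.
Qed.

Lemma h_succZ m : (h m.+1)%:Z = (h m)%:Z + 1 - (v2 m.+1)%:Z.
Proof. by have := h_succ m; lia. Qed.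

Lemma cl_b_weight_sum n :
  \sum_(0 <= k < n.+1) (cl_b k)%:Z * (1 - (h (n - k))%:Z) = 1.
Proof.
elim: n => [|n IH]; first by rewrite big_nat1 h0 cl_bE.
rewrite big_nat_recr //= subnn h0 mulr1.
rewrite (eq_big_nat _ _ (F2 := fun k => (cl_b k)%:Z * (1 - (h (n - k))%:Z)
  - (cl_b k)%:Z * (1 - (v2 (n.+1 - k))%:Z))).
  by rewrite sumrB IH -cl_b_rec // subrK.
move=> k /andP[_ le_kn]; rewrite subSn // h_succZ -mulrBr; congr (_ * _); lia.
Qed.

Theorem corollary10 (n : nat) (hn : (0 < n)%N) :
  ((cl_b n)%:Z = \sum_(0 <= k < n) (cl_b k)%:Z * (1 - (v2 (n - k))%:Z))
  /\ (\sum_(0 <= k < n.+1) (cl_b k)%:Z * (1 - (h (n - k))%:Z) = 1).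
Proof. by split; [exact: cl_b_rec | exact: cl_b_weight_sum]. Qed.
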